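(* For every $n\geq 1$, the relation $\leq$ on $\mathcal{PP}(n)$ defined by: $P\leq Q$ if and only if for all $x,y\in P$, $\theta_{P,Q}(x)\leq_h\theta_{P,Q}(y)$ in $Q$ implies $x\leq_h y$ in $P$, is a partial order on $\mathcal{PP}(n)$.
   Context: A plane poset is a finite set $P$ with two partial orders $\leq_h$ and $\leq_r$ such that for all $x\neq y$ in $P$, $x$ and $y$ are comparable for $\leq_h$ if and only if they are not comparable for $\leq_r$. $\mathcal{PP}(n)$ is the set of isomorphism classes (bijections preserving both orders) of plane posets with $n$ elements. On any plane poset the relation $x\leq y$ iff ($x\leq_h y$ or $x\leq_r y$) is a total order (known fact). For $P,Q$ of the same cardinality, $\theta_{P,Q}:P\to Q$ is the unique bijection increasing for these total orders. *)

From mathcomp Require Import all_boot.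
Set Implicit Arguments. Unset Strict Implicit. Unset Printing Implicit Defensive.

Definition partial_order (T : finType) (r : rel T) : Prop :=
  reflexive r /\ antisymmetric r /\ transitive r.

Record plane_poset (T : finType) : Type := PlanePoset {
  le_h : rel T;
  le_r : rel T;
  le_h_po : partial_order le_h;
  le_r_po : partial_order le_r;
  plane_ax : forall x y, x != y ->
    ((le_h x y || le_h y x) <-> ~~ (le_r x y || le_r y x))
}.

Definition le_tot (T : finType) (P : plane_poset T) : rel T :=
  fun x y => le_h P x y || le_r P x y.

Definition pp_iso (T U : finType) (P : plane_poset T) (Q : plane_poset U) : Prop :=
  exists f : T -> U, bijective f /\
    (forall x y, le_h Q (f x) (f y) = le_h P x y) /\
    (forall x y, le_r Q (f x) (f y) = le_r P x y).

Definition is_theta (T U : finType) (P : plane_poset T) (Q : plane_poset U)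
  (f : T -> U) : Prop :=
  bijective f /\ forall x y, le_tot P x y -> le_tot Q (f x) (f y).

(* P <= Q iff for all x y in P, theta(x) <=_h theta(y) in Q implies x <=_h y in P.
   Since theta_{P,Q} is the unique increasing bijection (known fact), we
   quantify over all such bijections. *)
Definition pp_le (T U : finType) (P : plane_poset T) (Q : plane_poset U) : Prop :=
  forall f : T -> U, is_theta P Q f ->
    forall x y, le_h Q (f x) (f y) -> le_h P x y.

From mathcomp Require Import all_boot.
Set Implicit Arguments. Unset Strict Implicit. Unset Printing Implicit Defensive.

(* The total order le_tot of a plane poset is ranked by the number of
   elements strictly below, so between two plane posets of the same size
   there is exactly one increasing bijection theta, and it is an isomorphism
   of the total orders.  Hence P <= Q can be tested on any one theta, and
   compositions and inverses of thetas are thetas: this gives reflexivity,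
   transitivity and invariance under isomorphism.  For antisymmetry, theta
   then preserves and reflects le_h, and le_r is determined by le_tot and
   le_h, so theta is an isomorphism of plane posets. *)

Section PlanePosetTheory.

Variables (T : finType) (P : plane_poset T).

Lemma le_h_refl : reflexive (le_h P). Proof. exact: (le_h_po P).1. Qed.
Lemma le_h_anti : antisymmetric (le_h P). Proof. exact: (le_h_po P).2.1. Qed.
Lemma le_h_trans : transitive (le_h P). Proof. exact: (le_h_po P).2.2. Qed.
Lemma le_r_refl : reflexive (le_r P). Proof. exact: (le_r_po P).1. Qed.
Lemma le_r_anti : antisymmetric (le_r P). Proof. exact: (le_r_po P).2.1. Qed.
Lemma le_r_trans : transitive (le_r P). Proof. exact: (le_r_po P).2.2. Qed.

Lemma eq_of_comparable_hr x y :
  le_h P x y || le_h P y x -> le_r P x y || le_r P y x -> x = y.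
Proof.
by move=> hxy; apply: contraTeq => /(plane_ax P)[+ _]; apply.
Qed.

Lemma comparable_hr x y :
  [|| le_h P x y, le_h P y x, le_r P x y | le_r P y x].
Proof.
case: (eqVneq x y) => [->|/(plane_ax P) [_ h_of_not_r]]; first by rewrite le_h_refl.
rewrite orbA; case: (le_h P x y || le_h P y x) h_of_not_r => //.
by case: (le_r P x y || le_r P y x) => // /(_ isT).
Qed.

Lemma le_tot_refl : reflexive (le_tot P).
Proof. by move=> x; rewrite /le_tot le_h_refl. Qed.

Lemma le_tot_anti : antisymmetric (le_tot P).
Proof.
move=> x y /andP[/orP[hxy|rxy] /orP[hyx|ryx]].
- by apply: le_h_anti; rewrite hxy.
- by apply: eq_of_comparable_hr; rewrite ?hxy ?ryx ?orbT.
- by apply: eq_of_comparable_hr; rewrite ?hyx ?rxy ?orbT.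
- by apply: le_r_anti; rewrite rxy.
Qed.

Lemma le_tot_total x y : le_tot P x y || le_tot P y x.
Proof.
by have := comparable_hr x y; rewrite /le_tot;
  case: (le_h P x y); case: (le_h P y x); case: (le_r P x y).
Qed.

Lemma le_tot_hr x y z : le_h P x y -> le_r P y z -> le_tot P x z.
Proof.
move=> hxy ryz; rewrite /le_tot.
case/or4P: (comparable_hr x z) => [->//|hzx|->|rzx]; rewrite ?orbT //.
- have eyz : y = z by apply: eq_of_comparable_hr; rewrite ?(le_h_trans hzx hxy) ?ryz ?orbT.
  by rewrite -eyz hxy.
- have exy : x = y by apply: eq_of_comparable_hr; rewrite ?(le_r_trans ryz rzx) ?hxy ?orbT.
  by rewrite exy ryz orbT.
Qed.

Lemma le_tot_rh x y z : le_r P x y -> le_h P y z -> le_tot P x z.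
Proof.
move=> rxy hyz; rewrite /le_tot.
case/or4P: (comparable_hr x z) => [->//|hzx|->|rzx]; rewrite ?orbT //.
- have exy : x = y by apply: eq_of_comparable_hr; rewrite ?(le_h_trans hyz hzx) ?rxy ?orbT.
  by rewrite exy hyz.
- have eyz : y = z by apply: eq_of_comparable_hr; rewrite ?(le_r_trans rzx rxy) ?hyz ?orbT.
  by rewrite -eyz rxy orbT.
Qed.

Lemma le_tot_trans : transitive (le_tot P).
Proof.
move=> y x z /orP[hxy|rxy] /orP[hyz|ryz].
- by rewrite /le_tot (le_h_trans hxy hyz).
- exact: le_tot_hr hxy ryz.
- exact: le_tot_rh rxy hyz.
- by rewrite /le_tot (le_r_trans rxy ryz) orbT.
Qed.

Lemma le_rE x y : le_r P x y = (x == y) || le_tot P x y && ~~ le_h P x y.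
Proof.
case: (eqVneq x y) => [->|nxy /=]; first by rewrite le_r_refl.
rewrite /le_tot; case rxy: (le_r P x y); last by rewrite orbF andbN.
suff -> : le_h P x y = false by [].
apply: contra_neqF nxy => hxy.
by apply: eq_of_comparable_hr; rewrite ?hxy ?rxy.
Qed.

Definition rank (x : T) : nat := #|[pred y | ~~ le_tot P x y]|.

Lemma le_tot_rank x y : le_tot P x y = (rank x <= rank y).
Proof.
apply/idP/idP => [xy | ].
  apply/subset_leq_card/subsetP => z; rewrite !inE.
  by apply: contra => yz; apply: le_tot_trans yz.
apply: contraTT => nxy; rewrite -ltnNge.
have yx : le_tot P y x by move: (le_tot_total x y); rewrite (negbTE nxy).
apply/proper_card/properP; split.
  apply/subsetP => z; rewrite !inE.
  by apply: contra => xz; apply: le_tot_trans xz.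
by exists y; rewrite !inE ?le_tot_refl.
Qed.

Lemma rank_inj : injective rank.
Proof.
by move=> x y exy; apply: le_tot_anti; rewrite !le_tot_rank exy leqnn.
Qed.

Lemma rank_lt_card x : rank x < #|T|.
Proof.
apply/proper_card/properP; split; first exact/subsetP.
by exists x; rewrite !inE ?le_tot_refl.
Qed.

End PlanePosetTheory.

Section Theta.

Variables (T U V : finType).
Variables (P : plane_poset T) (Q : plane_poset U) (R : plane_poset V).

Lemma theta_le_tot f : is_theta P Q f ->
  forall x y, le_tot Q (f x) (f y) = le_tot P x y.
Proof.
move=> [/bij_inj f_inj f_mono] x y; apply/idP/idP; last exact: f_mono.
move=> fxy; case: (boolP (le_tot P x y)) => // nxy.
have yx : le_tot P y x by move: (le_tot_total P x y); rewrite (negbTE nxy).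
have exy : x = y by apply/f_inj/(@le_tot_anti _ Q); rewrite fxy f_mono.
by move: nxy; rewrite exy le_tot_refl.
Qed.

Lemma theta_rank f : is_theta P Q f -> forall x, rank Q (f x) = rank P x.
Proof.
move=> th x; have [g fK gK] := th.1.
have f_onto z : z \in codom f by apply/codomP; exists (g z); rewrite gK.
rewrite /rank; transitivity #|[predI codom f & [pred z | ~~ le_tot Q (f x) z]]|.
  by apply: eq_card => z; rewrite !inE f_onto.
rewrite -(card_preim (can_inj fK)); apply: eq_card => y.
by rewrite !inE (theta_le_tot th).
Qed.

Lemma theta_unique f f' : is_theta P Q f -> is_theta P Q f' -> f =1 f'.
Proof.
by move=> th th' x; apply: (@rank_inj _ Q); rewrite (theta_rank th) (theta_rank th').
Qed.

Lemma theta_exists : #|T| = #|U| -> exists f, is_theta P Q f.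
Proof.
move=> eTU.
pose rankP x := Ordinal (rank_lt_card P x).
pose rankQ y := Ordinal (rank_lt_card Q y).
have [rankQ_inv rankQK rankQ_invK] : bijective rankQ.
  by apply: inj_card_bij => [y y' /(congr1 val)/rank_inj //|]; rewrite card_ord.
pose f x := rankQ_inv (cast_ord eTU (rankP x)).
have rank_f x : rank Q (f x) = rank P x by rewrite -[LHS]/(val (rankQ (f x))) rankQ_invK.
exists f; split; last by move=> x y; rewrite !le_tot_rank !rank_f.
apply: inj_card_bij; last by rewrite eTU.
by move=> x y /(congr1 (rank Q)); rewrite !rank_f => /rank_inj.
Qed.

Lemma theta_id : is_theta P P id.
Proof. by split=> //; exists id. Qed.

Lemma theta_comp f g : is_theta P Q f -> is_theta Q R g -> is_theta P R (g \o f).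
Proof.
move=> [fb f_mono] [gb g_mono]; split; first exact: bij_comp.
by move=> x y /f_mono /g_mono.
Qed.

Lemma theta_inv f g : is_theta P Q f -> cancel f g -> cancel g f ->
  is_theta Q P g.
Proof.
move=> th fK gK; split; first by exists f.
by move=> x y; rewrite -(theta_le_tot th) !gK.
Qed.

Lemma iso_theta f :
  (forall x y, le_h Q (f x) (f y) = le_h P x y) ->
  (forall x y, le_r Q (f x) (f y) = le_r P x y) ->
  bijective f -> is_theta P Q f.
Proof. by move=> fh fr fb; split=> // x y; rewrite /le_tot fh fr. Qed.

Lemma pp_le_theta f : is_theta P Q f ->
  (forall x y, le_h Q (f x) (f y) -> le_h P x y) -> pp_le P Q.
Proof.
by move=> th le f' th' x y; rewrite -!(theta_unique th th'); apply: le.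
Qed.

End Theta.

Theorem proposition10 (n : nat) (Hn : 1 <= n) :
  (* well-defined on isomorphism classes *)
  (forall (T T' U U' : finType) (P : plane_poset T) (P' : plane_poset T')
          (Q : plane_poset U) (Q' : plane_poset U'),
     #|T| = n -> #|U| = n -> pp_iso P P' -> pp_iso Q Q' ->
     pp_le P Q -> pp_le P' Q') /\
  (* reflexive *)
  (forall (T : finType) (P : plane_poset T), #|T| = n -> pp_le P P) /\
  (* antisymmetric (up to isomorphism) *)
  (forall (T U : finType) (P : plane_poset T) (Q : plane_poset U),
     #|T| = n -> #|U| = n -> pp_le P Q -> pp_le Q P -> pp_iso P Q) /\
  (* transitive *)
  (forall (T U V : finType) (P : plane_poset T) (Q : plane_poset U)
          (R : plane_poset V),
     #|T| = n -> #|U| = n -> #|V| = n ->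
     pp_le P Q -> pp_le Q R -> pp_le P R).
Proof.
split.
  move=> T T' U U' P P' Q Q' eT eU [g [gb [gh gr]]] [k [kb [kh kr]]] lePQ.
  have [f thf] := theta_exists P Q (etrans eT (esym eU)).
  have [gi gK giK] := gb.
  have thgi := theta_inv (iso_theta gh gr gb) gK giK.
  apply: (pp_le_theta (theta_comp (theta_comp thgi thf) (iso_theta kh kr kb))).
  by move=> x y /=; rewrite kh -{2}(giK x) -{2}(giK y) gh; apply: lePQ.
split.
  by move=> T P _; apply: (pp_le_theta (theta_id P)).
split.
  move=> T U P Q eT eU lePQ leQP.
  have [f thf] := theta_exists P Q (etrans eT (esym eU)).
  have [g fK gK] := thf.1.
  have f_le_h x y : le_h Q (f x) (f y) = le_h P x y.
    apply/idP/idP => [|hxy]; first exact: lePQ.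
    by apply: (leQP g (theta_inv thf fK gK)); rewrite !fK.
  exists f; split; [exact: thf.1 | split=> // x y].
  by rewrite !le_rE f_le_h (theta_le_tot thf) (inj_eq (can_inj fK)).
move=> T U V P Q R eT eU eV lePQ leQR.
have [f thf] := theta_exists P Q (etrans eT (esym eU)).
have [g thg] := theta_exists Q R (etrans eU (esym eV)).
apply: (pp_le_theta (theta_comp thf thg)) => x y /= /(leQR g thg).
exact: lePQ.
Qed.
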